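(* Let $\gamma=(\gamma_1,\dots,\gamma_b)$ be a parallel map on $V=V_1\oplus\cdots\oplus V_b$, $V_i\cong(\mathbb F_2)^m$ with $m\ge4$, and $0\gamma=0$. Suppose every $\gamma_i$ is differentially $4$-uniform and satisfies $\hat n(\gamma_i)=0$. If $\gamma$ maps $\mathcal{LA}_U(W_1|W_2)$ onto a non-trivial partition $\mathcal L(W)$, then $W$ and $W_1$ are walls and $W=W_1=W_2$; in particular $\mathcal{LA}_U(W_1|W_2)$ is linear.
   Context: Let $b>1$, $n=mb$, $V=(\mathbb F_2)^n=V_1\oplus\cdots\oplus V_b$, $V_i\cong(\mathbb F_2)^m$. Permutations act on the right. A parallel map is $\gamma\in\mathrm{Sym}(V)$ with $(v_1\oplus\cdots\oplus v_b)\gamma=v_1\gamma_1\oplus\cdots\oplus v_b\gamma_b$, $\gamma_i\in\mathrm{Sym}(V_i)$. A wall is $\bigoplus_{i\in I}V_i$ with $\emptyset\ne I\subsetneq\{1,\dots,b\}$. For $f:(\mathbb F_2)^m\to(\mathbb F_2)^m$, $\hat f_a(x)=f(x+a)+f(x)$; $f$ is differentially $\delta$-uniform if $\delta=\max_{a\ne0,b}|\{x:\hat f_a(x)=b\}|$; and $\hat n(f)=\max_{a\ne0}|\{v\ne0: x\mapsto\langle\hat f_a(x),v\rangle \text{ is constant}\}|$ with $\langle\cdot,\cdot\rangle$ the standard dot product. A permutation maps $\mathcal A$ onto $\mathcal B$ if it sends the blocks of $\mathcal A$ exactly onto those of $\mathcal B$; trivial partitions are the singleton partition and $\{V\}$.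 $\mathcal L(W)=\{W+v:v\in V\}$. For a subspace $U$ of dimension $n-1$ and subspaces $W_1,W_2\subseteq U$, $\mathcal{LA}_U(W_1|W_2)=\{W_1+v:v\in U\}\cup\{(W_2+\bar v)+v:v\in U\}$ for any $\bar v\in V\setminus U$. *)

From HB Require Import structures.
From mathcomp Require Import all_boot all_order all_algebra all_fingroup.
Set Implicit Arguments. Unset Strict Implicit. Unset Printing Implicit Defensive.
Import GRing.Theory.
Local Open Scope ring_scope.

Notation blk m := 'rV['F_2]_m.
(* V = V_1 (+) ... (+) V_b, an element is the family of its b components *)
Notation VV b m := {ffun 'I_b -> 'rV['F_2]_m}.

Definition dotp m (u v : blk m) : 'F_2 := \sum_(j < m) u 0 j * v 0 j.

Definition fder m (f : blk m -> blk m) (a x : blk m) : blk m := f (x + a) + f x.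

Definition diff_delta m (f : blk m -> blk m) : nat :=
  \max_(a : blk m | a != 0%R) \max_(c : blk m) #|[set x : blk m | fder f a x == c]|.
Definition diff_uniform m (f : blk m -> blk m) (delta : nat) : Prop :=
  diff_delta f = delta.

Definition nhat m (f : blk m -> blk m) : nat :=
  \max_(a : blk m | a != 0%R)
     #|[set v : blk m | (v != 0%R) &&
         [forall x, forall y, dotp (fder f a x) v == dotp (fder f a y) v]]|.

Definition parmap b m (g : 'I_b -> {perm blk m}) (v : VV b m) : VV b m :=
  [ffun i => g i (v i)].

Definition wall b m (W : {vspace VV b m}) : Prop :=
  exists I : {set 'I_b}, [/\ I != set0, I != setT &
    forall v : VV b m, (v \in W) = [forall i, (i \notin I) ==> (v i == 0%R)]].

Definition coset b m (W : {vspace VV b m}) (v : VV b m) : {set VV b m} :=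
  [set (w + v)%R | w : VV b m in W].

Definition Lpart b m (W : {vspace VV b m}) : {set {set VV b m}} :=
  [set coset W v | v : VV b m].

(* LA_U(W1|W2), built with the given vbar (assumed outside U) *)
Definition LApart b m (U W1 W2 : {vspace VV b m}) (vbar : VV b m)
  : {set {set VV b m}} :=
  [set coset W1 v | v in U] :|: [set coset W2 (vbar + v) | v in U].

Definition trivial_part b m (P : {set {set VV b m}}) : bool :=
  (P == [set [set x] | x : VV b m]) || (P == [set setT]).

Definition maps_onto b m (f : VV b m -> VV b m) (A B : {set {set VV b m}}) : Prop :=
  [set f @: X | X : {set VV b m} in A] = B.

From Pilot Require Import Defs.
From HB Require Import structures.
From mathcomp Require Import all_boot all_order all_algebra all_fingroup all_field.
Set Implicit Arguments. Unset Strict Implicit. Unset Printing Implicit Defensive.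
Import GRing.Theory.
Local Open Scope ring_scope.

(* Write A_i, B_i and U_i for the traces of W1, W and U on the block V_i.  Since the
   parallel map γ sends each block W1 + v (v in U) onto a coset of W, γ (w + v) + γ v lies
   in W for w in W1; on block i this says that γ_i maps cosets of A_i inside U_i into cosets
   of B_i.  As nhat γ_i = 0, no nonzero linear form is constant along a derivative of γ_i;
   in particular γ_i maps no hyperplane into a hyperplane.

   Let w in W1 with a = w_i <> 0.  If U misses some vector vanishing on block i, the
   derivative of γ_i in direction a is constant modulo B_i on each of the two cosets of
   U_i, so B_i has codimension at most one, and a hyperplane B_i would be the image of the
   hyperplane A_i; hence B_i = V_i.  Otherwise all the other blocks lie in U, the first case
   applies to them and puts a in A_i, and the derivative maps U_i into B_i \ 0 with fibres
   of size at most 4; this forces dim A_i >= m - 2, and again some hyperplane is mapped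
   into a hyperplane.  So W1 and W are both the sum of the blocks met by W1, a wall, and
   comparing the images of the block W2 + vbar gives W2 = W1. *)

Lemma card_le_mul_fibre (T T' : finType) (f : T -> T') (S : {set T}) (C : {set T'}) k :
  {in S, forall x, f x \in C} ->
  (forall c, #|[set x in S | f x == c]| <= k)%N -> (#|S| <= #|C| * k)%N.
Proof.
move=> fSC fibre_k.
rewrite -sum1_card (partition_big f (mem C)) //= -sum_nat_const.
apply: leq_sum => c _; apply: leq_trans (fibre_k c).
by rewrite -sum1_card; apply: eq_leq; apply: eq_bigl => x; rewrite !inE.
Qed.

Section FieldVector.
Variables (F : fieldType) (vT : vectType F).
Implicit Types (K : {vspace vT}) (y : vT).

Lemma dim_addv_line K y : y \notin K -> \dim (K + <[y]>) = (\dim K).+1.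
Proof.
move=> yK; have y0 : y != 0 by apply: contraNneq yK => ->; rewrite mem0v.
rewrite dimv_disjoint_sum ?dim_vline ?y0 ?addn1 //.
apply/eqP; rewrite -subv0; apply/subvP => x /memv_capP[xK /vlineP[k xk]].
rewrite memv0 xk; apply: contraNT yK; rewrite scaler_eq0 negb_or => /andP[k0 _].
by rewrite -[y](scalerK k0) memvZ -?xk.
Qed.

Lemma dim_addv_line_le K y : (\dim (K + <[y]>) <= (\dim K).+1)%N.
Proof.
by rewrite -addn1 (leq_trans (dimv_add_leqif _ _)) // leq_add2l dim_vline leq_b1.
Qed.

End FieldVector.

Lemma pchar_F2 : 2 \in [pchar 'F_2].
Proof. exact: pchar_Fp. Qed.

Section F2Vector.
Variable vT : vectType 'F_2.
Implicit Types (K : {vspace vT}) (x y : vT).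

Lemma addrr_F2 x : x + x = 0.
Proof. by rewrite -[x]scale1r -scalerDl addrr_pchar2 ?scale0r ?pchar_F2. Qed.

Lemma addrK_F2 x y : x + y + y = x.
Proof. by rewrite -addrA addrr_F2 addr0. Qed.

Lemma addKr_F2 x y : x + (x + y) = y.
Proof. by rewrite addrA addrr_F2 add0r. Qed.

Lemma addr_eq0_F2 x y : (x + y == 0) = (x == y).
Proof. by apply/eqP/eqP => [xy0|->]; [rewrite -(addrK_F2 x y) xy0 add0r | exact: addrr_F2]. Qed.

Lemma memv_add_line_F2 K x y : (y \in (K + <[x]>)%VS) = (y \in K) || (y + x \in K).
Proof.
apply/memv_addP/orP => [[k kK [_ /vlineP[c ->] ->]] | [yK | yxK]].
- have [->|->] : c = 0 \/ c = 1.
    by case: c => [[|[|n]] ?]; [left|right|by []]; exact: val_inj.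
  + by rewrite scale0r addr0; left.
  + by rewrite scale1r addrK_F2; right.
- by exists y => //; exists 0; rewrite ?addr0 ?mem0v.
- by exists (y + x) => //; exists x; rewrite ?addrK_F2 ?memv_line.
Qed.

Lemma memvD_notin_hyperplane K x y : (\dim K).+1 = \dim {:vT} ->
  x \notin K -> y \notin K -> x + y \in K.
Proof.
move=> dK xK yK; have /eqP KxF : (K + <[x]> == fullv)%VS.
  by rewrite eqEdim subvf /= dim_addv_line ?dK.
by have := memvf y; rewrite -KxF memv_add_line_F2 (negPf yK) addrC.
Qed.

Lemma dimv_index2 K : (forall x y, x \notin K -> y \notin K -> x + y \in K) ->
  (\dim {:vT} <= (\dim K).+1)%N.
Proof.
move=> K2; have [->|] := eqVneq K fullv; first exact: leqnSn.
rewrite eqEsubv subvf /= => /subvPn[x0 _ x0K].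
suff -> : fullv = (K + <[x0]>)%VS by rewrite dim_addv_line.
apply/eqP; rewrite eqEsubv subvf andbT; apply/subvP => x _.
have [xK|xK] := boolP (x \in K); first by rewrite -[x]addr0 memv_add ?mem0v.
by rewrite -[x](addrK_F2 x x0) memv_add ?K2 ?memv_line.
Qed.

End F2Vector.

Section Block.
Variable m : nat.
Implicit Types (f : blk m -> blk m) (g : {perm blk m}) (a c : blk m) (H K A B : {vspace blk m}).

Lemma dim_blk : dim (blk m) = m.
Proof. by rewrite dim_matrix mul1r. Qed.

Lemma dimv_blk : \dim {: blk m} = m.
Proof. by rewrite dimvf dim_blk. Qed.

Lemma card_blk_vspace K : #|[set x | x \in K]| = (2 ^ \dim K)%N.
Proof. by rewrite cardsE card_vspace card_Fp. Qed.

Lemma perm_dimv_le g A B : {in A, forall x, g x \in B} -> (\dim A <= \dim B)%N.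
Proof.
move=> gAB; rewrite -(leq_exp2l _ _ (ltnSn 1)) -!card_blk_vspace.
rewrite -(card_imset _ (@perm_inj _ g)); apply: subset_leq_card.
by apply/subsetP => _ /imsetP[x + ->]; rewrite !inE => /gAB.
Qed.

Lemma dotpDl (u v q : blk m) : dotp (u + v) q = dotp u q + dotp v q.
Proof. by rewrite /dotp -big_split; apply: eq_bigr => j _; rewrite mxE mulrDl. Qed.

Lemma dotpE (u q : blk m) : dotp u q = (u *m q^T) 0 0.
Proof. by rewrite mxE; apply: eq_bigr => j _; rewrite mxE. Qed.

Lemma exists_dotp_orthogonal B : B != fullv ->
  exists2 q : blk m, q != 0 & {in B, forall u, dotp u q = 0}.
Proof.
move=> BF; pose M := \matrix_(k < m, j < \dim B) (vbasis B)`_j 0 k.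
pose phi : 'Hom(blk m, 'rV['F_2]_(\dim B)) := linfun (mulmxr M).
have ker_phi : lker phi != 0%VS.
  apply: contra BF => /eqP ker0; rewrite eqEdim subvf /= dimv_blk.
  have := limg_ker_dim phi fullv; rewrite ker0 capv0 dimv0 add0n dimv_blk.
  move/esym/eq_leq/leq_trans; apply; apply: leq_trans (dimvS (subvf _)) _.
  by rewrite dimvf dim_matrix mul1r.
set q := vpick (lker phi); exists q; first by rewrite vpick0.
have := memv_pick (lker phi); rewrite memv_ker lfunE /= => /eqP qM0.
move=> u /coord_vbasis ->; rewrite dotpE mulmx_suml summxE big1 // => j _.
rewrite -scalemxAl mxE -[X in _ * X]dotpE.
have -> : dotp (vbasis B)`_j q = (q *m M) 0 j.
  by rewrite mxE; apply: eq_bigr => k _; rewrite mxE mulrC.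
by rewrite qM0 mxE mulr0.
Qed.

Lemma nhat0_fder_span_full f a K : nhat f = 0%N -> a != 0 ->
  (forall x, fder f a x + fder f a 0 \in K) -> K = fullv.
Proof.
move=> f_nhat0 a0 fK; apply/eqP; apply: contraT => KF.
have [q q0 qK] := exists_dotp_orthogonal KF.
have fq_const x : dotp (fder f a x) q = dotp (fder f a 0) q.
  by apply/eqP; rewrite -[X in _ == X](oppr_pchar2 pchar_F2) -addr_eq0 -dotpDl qK.
suff : (0 < nhat f)%N by rewrite f_nhat0.
apply: leq_trans _ (@leq_bigmax_cond _ (fun a : blk m => a != 0) _ a a0).
rewrite card_gt0; apply/set0Pn; exists q.
by rewrite inE q0; apply/forallP => x; apply/forallP => y; rewrite !fq_const.
Qed.

Lemma diff_uniform_card_fibre f d a c : diff_uniform f d -> a != 0 ->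
  (#|[set x | fder f a x == c]| <= d)%N.
Proof.
move=> <- a0; apply: leq_trans _ (@leq_bigmax_cond _ (fun a : blk m => a != 0) _ a a0).
exact: (leq_bigmax c).
Qed.

Lemma nhat0_not_map_hyperplane g H K : nhat g = 0%N ->
  (0 < \dim H)%N -> (\dim H).+1 = m -> (\dim K <= \dim H)%N ->
  ~ {in H, forall x, g x \in K}.
Proof.
move=> g_nhat0 H_gt0 dH dKH gHK.
have dK : (\dim K).+1 = \dim {: blk m}.
  rewrite dimv_blk -[RHS]dH; congr _.+1.
  by apply/eqP; rewrite eqn_leq dKH (perm_dimv_le gHK).
(* By counting, g also maps the complement of H into that of K, so every derivative of g
   in a direction of H takes its values in K. *)
have gHc x : x \notin H -> g x \notin K.
  move=> xH; apply/negP => gxK.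
  have : (#|g @: (x |: [set y | y \in H])| <= #|[set y | y \in K]|)%N.
    apply: subset_leq_card; apply/subsetP => _ /imsetP[y + ->]; rewrite !inE.
    by case/predU1P => [->|/gHK].
  rewrite card_imset; last exact: perm_inj.
  by rewrite cardsU1 !card_blk_vspace inE xH /= add1n ltn_exp2l // ltnNge dKH.
set a := vpick H; have a0 : a != 0 by rewrite vpick0 -dimv_eq0 -lt0n.
have aH : a \in H := memv_pick H.
have fderK x : fder g a x \in K.
  have [xH|xH] := boolP (x \in H); first by rewrite memvD ?gHK ?memvD.
  apply: memvD_notin_hyperplane dK (gHc _ _) (gHc _ xH).
  by apply: contra xH => xaH; rewrite -(addrK_F2 x a) memvD.
suff KF : K = fullv by move: dK; rewrite KF => /esym/n_Sn.
by apply: (nhat0_fder_span_full g_nhat0 a0) => x; rewrite memvD.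
Qed.

Lemma nhat0_fder_index2 f a H B : nhat f = 0%N -> a != 0 ->
  (forall x y, x \notin H -> y \notin H -> x + y \in H) ->
  (forall x y, x + y \in H -> fder f a x + fder f a y \in B) ->
  (m <= (\dim B).+1)%N.
Proof.
move=> f_nhat0 a0 H2 fHB.
have [HF|] := eqVneq H fullv.
  suff -> : B = fullv by rewrite dimv_blk leqnSn.
  by apply: (nhat0_fder_span_full f_nhat0 a0) => x; apply: fHB; rewrite HF memvf.
rewrite eqEsubv subvf /= => /subvPn[x0 _ x0H].
set y := fder f a x0 + fder f a 0.
suff BF : (B + <[y]> = fullv)%VS by have := dim_addv_line_le B y; rewrite BF dimv_blk.
apply: (nhat0_fder_span_full f_nhat0 a0) => x.
have [xH|xH] := boolP (x \in H).
  by rewrite -[_ + _]addr0 memv_add ?mem0v // fHB ?addr0.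
have -> : fder f a x + fder f a 0 = fder f a x + fder f a x0 + y.
  by rewrite [RHS]addrA addrK_F2.
by rewrite memv_add ?memv_line ?fHB ?H2.
Qed.

Lemma nhat0_diff4_no_coset_map g H A B s :
  nhat g = 0%N -> diff_uniform g 4 -> g 0 = 0 ->
  (\dim H).+1 = m -> (A <= H)%VS -> (\dim B <= \dim A)%N -> s \in A -> s != 0 ->
  ~ (forall a c, a \in A -> c \in H -> g (a + c) + g c \in B).
Proof.
move=> g_nhat0 g_diff4 g0 dH AH dBA sA s0 gAHB.
have gAB : {in A, forall a, g a \in B}.
  by move=> a aA; have := gAHB a 0 aA (mem0v H); rewrite addr0 g0 addr0.
have A_gt0 : (0 < \dim A)%N.
  by rewrite lt0n dimv_eq0; apply: contraNneq s0 => A0; rewrite -memv0 -A0.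
(* fder g s maps H into B \ 0 with fibres of size at most 4, hence A has codimension at
   most one in H; in both cases a hyperplane is mapped into a hyperplane. *)
have dHA : (\dim H < (\dim A).+2)%N.
  have cardB0 : #|[set y | y \in B] :\ 0| = (2 ^ \dim B).-1.
    by have := cardsD1 0 [set y | y \in B]; rewrite card_blk_vspace inE mem0v add1n => ->.
  have : (2 ^ \dim H <= (2 ^ \dim B).-1 * 4)%N.
    rewrite -card_blk_vspace -cardB0; apply: (card_le_mul_fibre (f := fder g s)).
      move=> c; rewrite !inE /fder (addrC c) => cH; rewrite gAHB // andbT.
      by rewrite addr_eq0_F2 (inj_eq perm_inj) -{2}[c]add0r (inj_eq (addIr c)).
    move=> c; apply: leq_trans (diff_uniform_card_fibre c g_diff4 s0).
    by apply: subset_leq_card; apply/subsetP => x; rewrite !inE => /andP[].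
  rewrite -(ltn_exp2l _ _ (ltnSn 1)) => /leq_ltn_trans; apply.
  apply: (@leq_trans (2 ^ \dim B * 4)); first by rewrite ltn_mul2r ltn_predL expn_gt0.
  by rewrite !expnS mulnA mulnC leq_pmul2l // leq_exp2l.
have := dimvS AH; rewrite leq_eqVlt => /orP[/eqP dAH | ltAH].
  by apply: (nhat0_not_map_hyperplane g_nhat0 A_gt0 _ dBA gAB); rewrite dAH.
have dH1 : \dim H = (\dim A).+1 by apply/eqP; rewrite eqn_leq -ltnS dHA.
have [c cH cA] : exists2 c, c \in H & c \notin A.
  by apply/subvPn/negP => /dimvS; rewrite dH1 ltnn.
apply: (nhat0_not_map_hyperplane (H := (A + <[c]>)%VS) (K := (B + <[g c]>)%VS) g_nhat0).
- by rewrite dim_addv_line.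
- by rewrite dim_addv_line // -dH1.
- by rewrite (dim_addv_line cA) (leq_trans (dim_addv_line_le _ _)).
move=> x; rewrite !memv_add_line_F2 => /orP[xA | xcA]; first by rewrite gAB.
by have := gAHB _ _ xcA cH; rewrite addrK_F2 => ->; rewrite orbT.
Qed.

End Block.

Definition incl b m (i : 'I_b) (x : blk m) : VV b m := [ffun j => if j == i then x else 0].

Lemma incl_is_linear b m (i : 'I_b) : linear (@incl b m i).
Proof.
by move=> c x y; apply/ffunP => j; rewrite !ffunE; case: eqP; rewrite ?scaler0 ?addr0.
Qed.
HB.instance Definition _ b m i :=
  GRing.isLinear.Build 'F_2 (blk m) (VV b m) _ (@incl b m i) (incl_is_linear i).

Definition blockv b m (i : 'I_b) (V : {vspace VV b m}) : {vspace blk m} :=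
  (linfun (@incl b m i) @^-1: V)%VS.

Definition block_support b m (V : {vspace VV b m}) : {set 'I_b} :=
  [set i | [exists v : VV b m, (v \in V) && (v i != 0)]].

Section Incl.
Variables b m : nat.
Implicit Types (i j : 'I_b) (x : blk m) (v : VV b m) (V : {vspace VV b m}).

Lemma dimv_VV : \dim {: VV b m} = (m * b)%N.
Proof. by rewrite dimvf /dim /= card_ord dim_blk mulnC. Qed.

Lemma inclE i x j : incl i x j = if j == i then x else 0.
Proof. by rewrite ffunE. Qed.

Lemma incl_id i x : incl i x i = x.
Proof. by rewrite inclE eqxx. Qed.

Lemma incl0 i : incl i 0 = 0 :> VV b m.
Proof. exact: linear0. Qed.

Lemma inclD i x y : incl i (x + y) = incl i x + incl i y.
Proof. exact: linearD. Qed.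

Lemma mem_blockv i V x : (x \in blockv i V) = (incl i x \in V).
Proof. by rewrite -memv_preim lfunE. Qed.

Lemma sum_incl v : \sum_i incl i (v i) = v.
Proof.
apply/ffunP => j; rewrite sum_ffunE (bigD1 j) //= big1 => [|i ij].
  by rewrite incl_id addr0.
by rewrite inclE eq_sym (negPf ij).
Qed.

Lemma memv_sum_incl V v : (forall i, v i != 0 -> incl i (v i) \in V) -> v \in V.
Proof.
move=> vV; rewrite -[v]sum_incl memv_suml // => i _.
by have [->|/vV//] := eqVneq (v i) 0; rewrite incl0 mem0v.
Qed.

End Incl.

Section ParallelMap.
Variables (b m : nat) (g : 'I_b -> {perm blk m}).
Implicit Types (i : 'I_b) (x : blk m) (v w : VV b m).

Lemma parmapE v i : parmap g v i = g i (v i).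
Proof. by rewrite ffunE. Qed.

Lemma parmap_inj : injective (parmap g).
Proof.
by move=> v w /ffunP gvw; apply/ffunP => i; apply: (@perm_inj _ (g i)); rewrite -!parmapE.
Qed.

Lemma parmap_incl i x : (forall j, g j 0 = 0) -> parmap g (incl i x) = incl i (g i x).
Proof.
by move=> g0; apply/ffunP => j; rewrite parmapE !inclE; case: eqP => [->|_] //; exact: g0.
Qed.

Lemma parmap0 : (forall i, g i 0 = 0) -> parmap g 0 = 0.
Proof. by move=> g0; apply/ffunP => i; rewrite parmapE !ffunE g0. Qed.

Lemma wall_parmap_addv (I : {set 'I_b}) (W : {vspace VV b m}) :
  (forall v, (v \in W) = [forall i, (i \notin I) ==> (v i == 0)]) ->
  forall v w, (parmap g v + parmap g w \in W) = (v + w \in W).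
Proof.
move=> memW v w; rewrite !memW; apply: eq_forallb => i.
by rewrite !ffunE !addr_eq0_F2 (inj_eq perm_inj).
Qed.

End ParallelMap.

Section Partitions.
Variables b m : nat.
Implicit Types (U W : {vspace VV b m}) (u v x : VV b m).

Lemma mem_coset W v x : (x \in Defs.coset W v) = (x + v \in W).
Proof.
apply/imsetP/idP => [[w wW ->]|xvW]; first by rewrite addrK_F2.
by exists (x + v); rewrite ?addrK_F2.
Qed.

Lemma trivial_Lpart0 : trivial_part (Lpart (0%VS : {vspace VV b m})).
Proof.
apply/orP; left; apply/eqP; apply: eq_imset => v; apply/setP => x.
by rewrite mem_coset memv0 inE addr_eq0_F2.
Qed.

Lemma LApart_same U W vbar : (\dim U).+1 = \dim {: VV b m} -> vbar \notin U ->
  LApart U W W vbar = Lpart W.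
Proof.
move=> dU vbarU; apply/setP => X; apply/setUP/imsetP => [[]|[u _ ->]].
- by case/imsetP => u _ ->; exists u.
- by case/imsetP => u _ ->; exists (vbar + u).
have [uU|uU] := boolP (u \in U); [left|right]; apply/imsetP.
  by exists u.
by exists (vbar + u); rewrite ?addKr_F2 ?memvD_notin_hyperplane.
Qed.

End Partitions.

Section MapsOnto.
Variables (b m : nat) (f : VV b m -> VV b m) (P : {set {set VV b m}}).
Variable W : {vspace VV b m}.
Hypothesis fPW : maps_onto f P (Lpart W).
Implicit Types (X : {set VV b m}) (x y : VV b m).

Lemma maps_onto_Lpart_coset X : X \in P -> exists y, f @: X = Defs.coset W y.
Proof.
move=> XP; have /imsetP[y _ fXy] : f @: X \in Lpart W by rewrite -fPW imset_f.
by exists y.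
Qed.

Lemma maps_onto_Lpart_addv X x y : X \in P -> x \in X -> y \in X -> f x + f y \in W.
Proof.
move=> /maps_onto_Lpart_coset[z fXz] xX yX.
have fXW u : u \in X -> f u + z \in W by move=> uX; rewrite -mem_coset -fXz imset_f.
by have := memvD (fXW x xX) (fXW y yX); rewrite addrACA addrr_F2 addr0.
Qed.

Lemma maps_onto_Lpart_onto X x y : X \in P -> x \in X -> y + f x \in W ->
  exists2 z, z \in X & f z = y.
Proof.
move=> /maps_onto_Lpart_coset[z fXz] xX yfxW.
have fxzW : f x + z \in W by rewrite -mem_coset -fXz imset_f.
have : y \in Defs.coset W z by rewrite mem_coset -(addrK_F2 y (f x)) -addrA memvD.
by rewrite -fXz => /imsetP[x' x'X ->]; exists x'.
Qed.

End MapsOnto.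

Section LApartImage.
Variables (b m : nat) (g : 'I_b -> {perm blk m}).
Variables (U W1 W2 W : {vspace VV b m}) (vbar : VV b m).
Hypotheses (m_gt1 : (1 < m)%N) (g0 : forall i, g i 0 = 0).
Hypotheses (g_diff4 : forall i, diff_uniform (g i) 4) (g_nhat0 : forall i, nhat (g i) = 0%N).
Hypotheses (dU : (\dim U).+1 = \dim {: VV b m}) (W1U : (W1 <= U)%VS) (vbarU : vbar \notin U).
Hypothesis gLA : maps_onto (parmap g) (LApart U W1 W2 vbar) (Lpart W).
Implicit Types (i j : 'I_b) (x y : blk m) (u v w r : VV b m).

Lemma coset_W1_LApart v : v \in U -> Defs.coset W1 v \in LApart U W1 W2 vbar.
Proof. by move=> vU; apply/setUP; left; apply: imset_f. Qed.

Lemma coset_W2_LApart : Defs.coset W2 (vbar + 0) \in LApart U W1 W2 vbar.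
Proof. by apply/setUP; right; apply/imset_f/mem0v. Qed.

Lemma parmap_W1_addv v w : v \in U -> w \in W1 -> parmap g (w + v) + parmap g v \in W.
Proof.
move=> vU wW1; apply: (maps_onto_Lpart_addv gLA (coset_W1_LApart vU)).
  by rewrite mem_coset addrK_F2.
by rewrite mem_coset addrr_F2 mem0v.
Qed.

Lemma parmap_W1_onto u : u \in W -> exists2 w, w \in W1 & parmap g w = u.
Proof.
move=> uW; have := maps_onto_Lpart_onto gLA (coset_W1_LApart (mem0v U)) (x := 0) (y := u).
rewrite mem_coset addr0 mem0v parmap0 // addr0 => /(_ isT uW)[w].
by rewrite mem_coset addr0; exists w.
Qed.

Lemma parmap_W2_addv w : w \in W2 -> parmap g (w + vbar) + parmap g vbar \in W.
Proof.
move=> wW2; apply: (maps_onto_Lpart_addv gLA coset_W2_LApart).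
  by rewrite mem_coset addr0 addrK_F2.
by rewrite mem_coset addr0 addrr_F2 mem0v.
Qed.

Lemma parmap_W2_onto v : parmap g v + parmap g vbar \in W -> v + vbar \in W2.
Proof.
move=> gvW; have vbarX : vbar \in Defs.coset W2 (vbar + 0).
  by rewrite mem_coset addr0 addrr_F2 mem0v.
have [z] := maps_onto_Lpart_onto gLA coset_W2_LApart vbarX gvW.
by rewrite mem_coset addr0 => zW2 /parmap_inj <-.
Qed.

Lemma incl_W1_W i x : (incl i x \in W1) = (incl i (g i x) \in W).
Proof.
apply/idP/idP => [xW1 | gxW].
  by have := parmap_W1_addv (mem0v U) xW1; rewrite !addr0 parmap0 // addr0 parmap_incl.
have [w wW1] := parmap_W1_onto gxW; rewrite -parmap_incl //.
by move/parmap_inj <-.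
Qed.

Lemma dim_blockv_W1 i : \dim (blockv i W1) = \dim (blockv i W).
Proof.
apply/eqP; rewrite eqn_leq; apply/andP; split.
  by apply: (perm_dimv_le (g := g i)) => x; rewrite !mem_blockv incl_W1_W.
by apply: (perm_dimv_le (g := (g i)^-1%g)) => y; rewrite !mem_blockv incl_W1_W permKV.
Qed.

Lemma fder_blockv i w v v' : w \in W1 -> v \in U -> v' \in U ->
  (forall j, j != i -> v j = v' j) ->
  fder (g i) (w i) (v i) + fder (g i) (w i) (v' i) \in blockv i W.
Proof.
move=> wW1 vU v'U vv'; rewrite mem_blockv.
have := memvD (parmap_W1_addv vU wW1) (parmap_W1_addv v'U wW1).
congr (_ \in W); apply/ffunP => j; rewrite !ffunE /fder.
have [->|ji] := eqVneq j i; first by rewrite ![w i + _]addrC.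
by rewrite vv' // addrr_F2.
Qed.

Lemma blockv_U_index2 i x y : x \notin blockv i U -> y \notin blockv i U ->
  x + y \in blockv i U.
Proof. by rewrite !mem_blockv inclD; apply: memvD_notin_hyperplane. Qed.

Lemma blockv_W_full i : (m <= (\dim (blockv i W)).+1)%N -> blockv i W = fullv.
Proof.
rewrite leq_eqVlt ltnS => /orP[/eqP dB | le_m]; last first.
  by apply/eqP; rewrite eqEdim subvf dimv_blk.
exfalso; apply: (nhat0_not_map_hyperplane (g_nhat0 i) (H := blockv i W1) (K := blockv i W)).
- by rewrite dim_blockv_W1 -ltnS -dB.
- by rewrite dim_blockv_W1 -dB.
- by rewrite dim_blockv_W1.
- by move=> x; rewrite !mem_blockv incl_W1_W.
Qed.

Lemma blockv_W_full_offblock i w r : r \notin U -> r i = 0 -> w \in W1 -> w i != 0 ->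
  blockv i W = fullv.
Proof.
move=> rU ri0 wW1 wi0; apply: blockv_W_full.
(* Translating by r ties the two cosets of blockv i U together inside U. *)
apply: (nhat0_fder_index2 (g_nhat0 i) wi0 (blockv_U_index2 (i := i))) => x y.
rewrite mem_blockv inclD => xyU.
have [xU|xU] := boolP (incl i x \in U).
  have yU : incl i y \in U by rewrite -[incl i y](addKr_F2 (incl i x)) memvD.
  have := fder_blockv (i := i) wW1 xU yU; rewrite !incl_id; apply=> j ji.
  by rewrite !inclE (negPf ji).
have yU : incl i y \notin U.
  by apply: contra xU => yU; rewrite -[incl i x](addrK_F2 _ (incl i y)) memvD.
have := fder_blockv (i := i) wW1 (memvD_notin_hyperplane dU xU rU)
  (memvD_notin_hyperplane dU yU rU).
rewrite !ffunE eqxx ri0 !addr0; apply=> j ji.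
by rewrite !ffunE (negPf ji).
Qed.

Lemma W1_block_eq0 i w : (forall r, r i = 0 -> r \in U) -> w \in W1 -> w i = 0.
Proof.
move=> offU wW1; apply/eqP/negPn/negP => wi0.
have [x0 x0U] : exists x0, incl i x0 \notin U.
  apply/existsP; apply: contraT; rewrite negb_exists => /forallP inU.
  case/negP: vbarU; apply: memv_sum_incl => j _.
  have [->|ji] := eqVneq j i; first exact/negbNE/inU.
  by apply: offU; rewrite inclE eq_sym (negPf ji).
have W1_offdiag j : j != i -> incl j (w j) \in W1.
  move=> ji; have [->|wj0] := eqVneq (w j) 0; first by rewrite incl0 mem0v.
  rewrite incl_W1_W -mem_blockv (blockv_W_full_offblock x0U _ wW1 wj0) ?memvf //.
  by rewrite inclE (negPf ji).
have wiW1 : w i \in blockv i W1.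
  rewrite mem_blockv; have -> : incl i (w i) = w - \sum_(j | j != i) incl j (w j).
    by rewrite -{2}[w]sum_incl (bigD1 i) //= addrK.
  by rewrite memvB // memv_suml.
have dUi : (\dim (blockv i U)).+1 = m.
  have := dimv_index2 (blockv_U_index2 (i := i)).
  rewrite dimv_blk leq_eqVlt ltnS => /orP[/eqP <- // | le_m].
  case/negP: x0U; rewrite -mem_blockv.
  suff /eqP -> : blockv i U == fullv by rewrite memvf.
  by rewrite eqEdim subvf dimv_blk.
apply: (nhat0_diff4_no_coset_map (g_nhat0 i) (g_diff4 i) (g0 i) dUi _ _ wiW1 wi0).
- by apply/subvP => x; rewrite !mem_blockv => /(subvP W1U).
- by rewrite dim_blockv_W1.
move=> a c; rewrite !mem_blockv => aW1 cU.
by have := parmap_W1_addv cU aW1; rewrite -inclD !parmap_incl // -inclD.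
Qed.

Lemma blockv_W_full_support i w : w \in W1 -> w i != 0 -> blockv i W = fullv.
Proof.
move=> wW1 wi0.
have [/existsP[r /andP[/eqP ri0 rU]] | ] :=
  boolP [exists r : VV b m, (r i == 0) && (r \notin U)].
  exact: blockv_W_full_offblock rU ri0 wW1 wi0.
rewrite negb_exists => /forallP offU; case/eqP: wi0.
apply: (W1_block_eq0 _ wW1) => r ri0.
by have := offU r; rewrite ri0 eqxx negbK.
Qed.

Lemma mem_W1_block_support v :
  (v \in W1) = [forall i, (i \notin block_support W1) ==> (v i == 0)].
Proof.
apply/idP/forallP => [vW1 i | vsupp].
  by apply/implyP; apply: contraR => vi0; rewrite inE; apply/existsP; exists v; rewrite vW1.
apply: memv_sum_incl => i vi0.
have : i \in block_support W1 by apply: contraR vi0 => /(implyP (vsupp i)).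
rewrite inE => /existsP[w /andP[wW1 wi0]].
by rewrite incl_W1_W -mem_blockv (blockv_W_full_support wW1 wi0) memvf.
Qed.

Lemma W_eq_W1 : W = W1.
Proof.
apply/vspaceP => v; apply/idP/idP => [vW | vW1].
  have [w wW1 <-] := parmap_W1_onto vW.
  rewrite -[parmap g w]addr0 -(parmap0 g0).
  by rewrite (wall_parmap_addv _ mem_W1_block_support) addr0.
apply: memv_sum_incl => i vi0.
by rewrite -mem_blockv (blockv_W_full_support vW1 vi0) memvf.
Qed.

Lemma W2_eq_W1 : W2 = W1.
Proof.
have gW1 := wall_parmap_addv g mem_W1_block_support.
apply/vspaceP => v; apply/idP/idP => [vW2 | vW1].
  by have := parmap_W2_addv vW2; rewrite W_eq_W1 gW1 addrK_F2.
by have := @parmap_W2_onto (v + vbar); rewrite addrK_F2 W_eq_W1 gW1 addrK_F2; apply.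
Qed.

Lemma wall_W1 : ~~ trivial_part (Lpart W) -> wall W1.
Proof.
move=> W_nontriv; exists (block_support W1); split; last exact: mem_W1_block_support.
  have W10 : W1 != 0%VS.
    by apply: contraNneq W_nontriv => W10; rewrite W_eq_W1 W10 trivial_Lpart0.
  set v := vpick W1; have v0 : v != 0 by rewrite vpick0.
  have [i vi0] : exists i, v i != 0.
    apply/existsP; apply: contraNT v0; rewrite negb_exists => /forallP v0i.
    by apply/eqP/ffunP => i; rewrite ffunE; apply/eqP/negbNE/v0i.
  by apply/set0Pn; exists i; rewrite inE; apply/existsP; exists v; rewrite memv_pick.
apply: contraNneq vbarU => W1_suppT; apply: (subvP W1U).
by rewrite mem_W1_block_support; apply/forallP => i; rewrite W1_suppT inE.
Qed.

End LApartImage.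

Theorem lemma3p16 (b m : nat) (g : 'I_b -> {perm 'rV['F_2]_m})
  (U W1 W2 W : {vspace {ffun 'I_b -> 'rV['F_2]_m}})
  (vbar : {ffun 'I_b -> 'rV['F_2]_m}) :
  (1 < b)%N -> (4 <= m)%N ->
  parmap g 0 = 0 ->
  (forall i, diff_uniform (g i) 4) ->
  (forall i, nhat (g i) = 0%N) ->
  \dim U = (m * b).-1 ->
  (W1 <= U)%VS -> (W2 <= U)%VS ->
  vbar \notin U ->
  ~~ trivial_part (Lpart W) ->
  maps_onto (parmap g) (LApart U W1 W2 vbar) (Lpart W) ->
  [/\ wall W, wall W1, W = W1, W1 = W2 & LApart U W1 W2 vbar = Lpart W1].
Proof.
move=> b_gt1 m_ge4 g0 g_diff4 g_nhat0 dimU W1U _ vbarU W_nontriv gLA.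
have m_gt1 : (1 < m)%N by apply: leq_trans m_ge4.
have gi0 i : g i 0 = 0 by have /ffunP/(_ i) := g0; rewrite !ffunE.
have dU : (\dim U).+1 = \dim {: VV b m}.
  by rewrite dimv_VV dimU prednK // muln_gt0 ltnW // ltnW.
have W_W1 := W_eq_W1 m_gt1 gi0 g_diff4 g_nhat0 dU W1U vbarU gLA.
have W2_W1 := W2_eq_W1 m_gt1 gi0 g_diff4 g_nhat0 dU W1U vbarU gLA.
have W1_wall := wall_W1 m_gt1 gi0 g_diff4 g_nhat0 dU W1U vbarU gLA W_nontriv.
by rewrite W_W1 W2_W1 LApart_same.
Qed.
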